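(* Let $G$ be a simple undirected graph on $\{1,\dots,n\}$ with adjacency $g_{ij}$ and degrees $d_i$, and let the exposure of unit $i$ be $e_i=\sum_j g_{ij}z_j\in\{0,1,\dots,d_i\}$. Suppose the potential outcomes are $Y_i(z_i,e_i)=\alpha_i+\beta_iz_i+B_i(e_i)$ with $B_i(0)=0$. Under a completely randomized design with $1\le n_t\le n-1$ treated units, and under a restricted Bernoulli design with $0<p<1$, the bias of $$\hat\beta_{naive}=\frac{\sum_i Y_i^{obs}Z_i}{\sum_i Z_i}-\frac{\sum_i Y_i^{obs}(1-Z_i)}{\sum_i(1-Z_i)}$$ for $\mathrm{DTE}=\frac1n\sum_i(Y_i(1,0)-Y_i(0,0))$ is $$\mathbb E[\hat\beta_{naive}]-\mathrm{DTE}=\sum_i\sum_{e\ne0}B_i(e)\big[\alpha_i(1,e)-\alpha_i(0,e)\big],$$ where $\alpha_i(z,e)=\mathbb E\!\left[\frac{I(Z_i=z,E_i=e)}{\sum_jI(Z_j=z)}\right]$.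
   Context: Completely randomized design: $\mathbf Z$ is uniform over vectors in $\{0,1\}^n$ with exactly $n_t$ ones. Restricted Bernoulli design with parameter $p$: $P(\mathbf Z=\mathbf z)=p^{|\mathbf z|}(1-p)^{n-|\mathbf z|}/(1-p^n-(1-p)^n)$ for $0<|\mathbf z|<n$ and $0$ otherwise, where $|\mathbf z|=\sum_i z_i$. $E_i=\sum_j g_{ij}Z_j$ and $Y_i^{obs}=Y_i(Z_i,E_i)$. *)

From HB Require Import structures.
From mathcomp Require Import all_boot all_order all_algebra.
Set Implicit Arguments. Unset Strict Implicit. Unset Printing Implicit Defensive.
Import Order.TTheory GRing.Theory Num.Theory.
Local Open Scope ring_scope.

(* A treatment assignment vector z in {0,1}^n (true = treated). *)
Notation assign n := {ffun 'I_n -> bool}.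

Definition ntreated n (z : assign n) : nat := \sum_(i < n) (z i : nat).

Definition simple_graph n (g : rel 'I_n) : Prop :=
  (forall i j, g i j = g j i) /\ (forall i, g i i = false).

Definition degree n (g : rel 'I_n) (i : 'I_n) : nat := #|[set j | g i j]|.

Definition exposure n (g : rel 'I_n) (z : assign n) (i : 'I_n) : nat :=
  \sum_(j < n) ((g i j && z j) : nat).

(* A design is a probability mass function on assignment vectors. *)
Definition design (R : realFieldType) n := assign n -> R.

Definition crd (R : realFieldType) n (nt : nat) : design R n :=
  fun z => if ntreated z == nt then ('C(n, nt)%:R)^-1 else 0.

Definition rbd (R : realFieldType) n (p : R) : design R n :=
  fun z => if (0 < ntreated z)%N && (ntreated z < n)%N then
             p ^+ ntreated z * (1 - p) ^+ (n - ntreated z)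
               / (1 - p ^+ n - (1 - p) ^+ n)
           else 0.

Definition Exp (R : realFieldType) n (P : design R n) (f : assign n -> R) : R :=
  \sum_(z : assign n) P z * f z.

Definition Ypot (R : realFieldType) n (alpha beta : 'I_n -> R) (B : 'I_n -> nat -> R)
  (i : 'I_n) (zi : bool) (e : nat) : R :=
  alpha i + beta i * (zi : nat)%:R + B i e.

Definition Yobs (R : realFieldType) n (g : rel 'I_n) (alpha beta : 'I_n -> R)
  (B : 'I_n -> nat -> R) (z : assign n) (i : 'I_n) : R :=
  Ypot alpha beta B i (z i) (exposure g z i).

Definition beta_naive (R : realFieldType) n (g : rel 'I_n) (alpha beta : 'I_n -> R)
  (B : 'I_n -> nat -> R) (z : assign n) : R :=
  (\sum_(i < n) Yobs g alpha beta B z i * (z i : nat)%:R) / (\sum_(i < n) (z i : nat)%:R)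
  - (\sum_(i < n) Yobs g alpha beta B z i * (1 - (z i : nat)%:R))
      / (\sum_(i < n) (1 - (z i : nat)%:R)).

Definition DTE (R : realFieldType) n (alpha beta : 'I_n -> R) (B : 'I_n -> nat -> R) : R :=
  n%:R^-1 * \sum_(i < n) (Ypot alpha beta B i true 0 - Ypot alpha beta B i false 0).

Definition alpha_ze (R : realFieldType) n (P : design R n) (g : rel 'I_n)
  (i : 'I_n) (zv : bool) (e : nat) : R :=
  Exp P (fun z => ((z i == zv) && (exposure g z i == e))%:R
                  / (\sum_(j < n) (z j == zv)%:R)).

Definition bias_formula (R : realFieldType) n (P : design R n) (g : rel 'I_n)
  (alpha beta : 'I_n -> R) (B : 'I_n -> nat -> R) : Prop :=
  Exp P (beta_naive g alpha beta B) - DTE alpha beta B =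
  \sum_(i < n) \sum_(1 <= e < (degree g i).+1)
     B i e * (alpha_ze P g i true e - alpha_ze P g i false e).

(* Both designs give every assignment z a probability f(|z|) that depends on z only
   through |z| and vanishes unless 0 < |z| < n.  Such a design is exchangeable, so
   E[Z_i/|Z|] and E[(1 - Z_i)/(n - |Z|)] do not depend on i; summed over i they give 1,
   hence both equal 1/n.  Expanding Y_i^obs in the naive estimator, the alpha_i and
   beta_i terms therefore contribute exactly DTE, and what is left is
   E[B_i(E_i) (Z_i/|Z| - (1 - Z_i)/(n - |Z|))], which splits over the values e of
   E_i into the alpha_i(z, e) terms; e = 0 drops out because B_i(0) = 0. *)

From mathcomp Require Import all_boot all_order all_algebra.
From mathcomp Require Import fingroup perm ring lra.
Set Implicit Arguments. Unset Strict Implicit. Unset Printing Implicit Defensive.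
Import Order.TTheory GRing.Theory Num.Theory.
Local Open Scope ring_scope.

Section Expectation.
Variables (R : realFieldType) (n : nat).
Implicit Types (P : design R n) (F G : assign n -> R).

Lemma ExpD P F G : Exp P (fun z => F z + G z) = Exp P F + Exp P G.
Proof. by rewrite /Exp -big_split; apply: eq_bigr => z _; rewrite mulrDr. Qed.

Lemma ExpB P F G : Exp P (fun z => F z - G z) = Exp P F - Exp P G.
Proof. by rewrite /Exp -sumrB; apply: eq_bigr => z _; rewrite mulrBr. Qed.

Lemma ExpZ P c F : Exp P (fun z => c * F z) = c * Exp P F.
Proof. by rewrite /Exp mulr_sumr; apply: eq_bigr => z _; rewrite mulrCA. Qed.

Lemma Exp_sum P (I : Type) (r : seq I) (Q : pred I) (F : I -> assign n -> R) :
  Exp P (fun z => \sum_(i <- r | Q i) F i z) = \sum_(i <- r | Q i) Exp P (F i).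
Proof. by rewrite /Exp; under eq_bigr do rewrite mulr_sumr; rewrite exchange_big. Qed.

Lemma eq_Exp P F G : (forall z, P z != 0 -> F z = G z) -> Exp P F = Exp P G.
Proof.
move=> eqFG; apply: eq_bigr => z _.
by have [->|/eqFG ->] := eqVneq (P z) 0; rewrite ?mul0r.
Qed.

End Expectation.

Section Counting.
Variable n : nat.
Implicit Types (z : assign n) (g : rel 'I_n).

Lemma exposure_le_degree g z i : (exposure g z i <= degree g i)%N.
Proof.
rewrite /exposure /degree -sum1dep_card [X in (_ <= X)%N]big_mkcond.
by apply: leq_sum => j _; case: (g i j); case: (z j).
Qed.

Lemma ntreated_perm (s : {perm 'I_n}) z : ntreated [ffun i => z (s i)] = ntreated z.
Proof.
rewrite /ntreated; under eq_bigr do rewrite ffunE.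
by rewrite [RHS](reindex_inj (@perm_inj _ s)).
Qed.

Lemma sum_assign_exchange (V : nmodType) (F : bool -> nat -> V) i j :
  \sum_(z : assign n) F (z i) (ntreated z) = \sum_(z : assign n) F (z j) (ntreated z).
Proof.
pose swap (z : assign n) : assign n := [ffun k => z (tperm i j k)].
have swapK : involutive swap by move=> z; apply/ffunP => k; rewrite !ffunE tpermK.
rewrite (reindex_inj (inv_inj swapK)).
by apply: eq_bigr => z _; rewrite ntreated_perm ffunE tpermL.
Qed.

Lemma sum_assign_ntreated (V : nmodType) (F : nat -> V) :
  \sum_(z : assign n) F (ntreated z) = \sum_(k < n.+1) F k *+ 'C(n, k).
Proof.
pose of_set (A : {set 'I_n}) : assign n := [ffun i => i \in A].
have of_set_bij : bijective of_set.
  exists (fun z : assign n => [set i | z i]) => [A|z].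
    by apply/setP => i; rewrite inE ffunE.
  by apply/ffunP => i; rewrite ffunE inE.
have ntreated_of_set A : ntreated (of_set A) = #|A|.
  rewrite -sum1_card [RHS]big_mkcond; apply: eq_bigr => i _.
  by rewrite ffunE; case: (i \in A).
rewrite (reindex of_set) /=; last exact: onW_bij.
under eq_bigr do rewrite ntreated_of_set.
have card_le (A : {set 'I_n}) : (#|A| < n.+1)%N by have := max_card A; rewrite card_ord.
rewrite (partition_big (fun A => Ordinal (card_le A)) xpredT) //=.
apply: eq_bigr => k _.
rewrite (eq_bigr (fun _ => F k)) => [|A /eqP <-//].
rewrite sumr_const; congr (_ *+ _).
have := card_draws 'I_n k; rewrite card_ord => <-.
by apply: eq_card => A; rewrite inE.
Qed.

End Counting.

Lemma sum_nat_indicator (R : pzRingType) (b : nat -> R) d k :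
  b 0%N = 0 -> (k <= d)%N -> \sum_(1 <= e < d.+1) b e * (k == e)%:R = b k.
Proof.
move=> b0 le_kd; under eq_bigr do rewrite mulr_natr mulrb eq_sym.
rewrite -big_mkcond big_nat1_eq ltnS le_kd andbT.
by case: k {le_kd}.
Qed.

Definition treated_share {R : realFieldType} n (z : assign n) (i : 'I_n) : R :=
  (z i : nat)%:R / (ntreated z)%:R.

Definition control_share {R : realFieldType} n (z : assign n) (i : 'I_n) : R :=
  (1 - (z i : nat)%:R) / (n%:R - (ntreated z)%:R).

Section Pointwise.
Variables (R : realFieldType) (n : nat) (g : rel 'I_n).
Implicit Types (z : assign n) (P : design R n).

Lemma sum_treated_natr z : \sum_(i < n) (z i : nat)%:R = (ntreated z)%:R :> R.
Proof. by rewrite natr_sum. Qed.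

Lemma sum_control_natr z :
  \sum_(i < n) (1 - (z i : nat)%:R) = n%:R - (ntreated z)%:R :> R.
Proof. by rewrite sumrB sumr_const card_ord sum_treated_natr. Qed.

Lemma beta_naiveE (alpha beta : 'I_n -> R) (B : 'I_n -> nat -> R) z :
  beta_naive g alpha beta B z =
  \sum_(i < n) ((alpha i + beta i + B i (exposure g z i)) * treated_share z i
                - (alpha i + B i (exposure g z i)) * control_share z i).
Proof.
rewrite /beta_naive sum_treated_natr sum_control_natr !mulr_suml -sumrB.
apply: eq_bigr => i _; rewrite /Yobs /Ypot /treated_share /control_share.
by case: (z i) => /=; ring.
Qed.

Lemma alpha_ze_trueE P i e :
  alpha_ze P g i true e = Exp P (fun z => (exposure g z i == e)%:R * treated_share z i).
Proof.
apply: eq_bigr => z _; congr (_ * _).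
under eq_bigr do rewrite eqb_id.
by rewrite sum_treated_natr /treated_share eqb_id mulrA -natrM mulnb andbC.
Qed.

Lemma alpha_ze_falseE P i e :
  alpha_ze P g i false e = Exp P (fun z => (exposure g z i == e)%:R * control_share z i).
Proof.
apply: eq_bigr => z _; congr (_ * _).
have -> : \sum_(j < n) (z j == false)%:R = n%:R - (ntreated z)%:R :> R.
  by rewrite -sum_control_natr; apply: eq_bigr => j _; case: (z j); rewrite ?subrr ?subr0.
by rewrite /control_share; case: (z i) => /=; ring.
Qed.

End Pointwise.

Definition exchangeable_design (R : realFieldType) n (f : nat -> R) : design R n :=
  fun z => f (ntreated z).

Section ExchangeableDesign.
Variables (R : realFieldType) (n : nat) (f : nat -> R).
Hypothesis f_supp : forall k, f k != 0 -> (0 < k < n)%N.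
Hypothesis f_mass : \sum_(z : assign n) f (ntreated z) = 1.
Local Notation P := (@exchangeable_design R n f).

Lemma exchangeable_size_gt0 : (0 < n)%N.
Proof.
case: (posnP n) => // n0; move: f_mass; rewrite big1 => [/eqP|z _].
  by rewrite eq_sym oner_eq0.
by apply: contraTeq isT => /f_supp /andP[_]; rewrite [X in (_ < X)%N]n0.
Qed.

Lemma Exp_exchangeable_share (h : bool -> nat -> R) (i : 'I_n) :
  (forall z : assign n,
     (0 < ntreated z < n)%N -> \sum_(j < n) h (z j) (ntreated z) = 1) ->
  Exp P (fun z => h (z i) (ntreated z)) = n%:R^-1.
Proof.
move=> h_sum.
have n_neq0 : n%:R != 0 :> R by rewrite pnatr_eq0 -lt0n exchangeable_size_gt0.
have share_indep j :
    Exp P (fun z => h (z j) (ntreated z)) = Exp P (fun z => h (z i) (ntreated z)).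
  exact: (sum_assign_exchange (fun b k => f k * h b k)).
have : \sum_(j < n) Exp P (fun z => h (z j) (ntreated z)) = 1.
  have Exp1 : Exp P (fun=> 1) = 1.
    by rewrite /Exp; under eq_bigr do rewrite mulr1; exact: f_mass.
  by rewrite -Exp_sum -[RHS]Exp1; apply: eq_Exp => z /f_supp /h_sum.
under eq_bigr do rewrite share_indep.
rewrite sumr_const card_ord => share_sum.
by apply: (mulfI n_neq0); rewrite divff // mulr_natl.
Qed.

Lemma Exp_treated_share (i : 'I_n) : Exp P (fun z => treated_share z i) = n%:R^-1.
Proof.
apply: (@Exp_exchangeable_share (fun b k => (b : nat)%:R / k%:R)) => z /andP[z_gt0 _].
by rewrite -mulr_suml sum_treated_natr divff // pnatr_eq0 -lt0n.
Qed.

Lemma Exp_control_share (i : 'I_n) : Exp P (fun z => control_share z i) = n%:R^-1.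
Proof.
apply: (@Exp_exchangeable_share (fun b k => (1 - (b : nat)%:R) / (n%:R - k%:R))).
move=> z /andP[_ z_lt_n].
by rewrite -mulr_suml sum_control_natr divff // subr_eq0 eqr_nat neq_ltn z_lt_n orbT.
Qed.

Lemma bias_formula_exchangeable (g : rel 'I_n) (alpha beta : 'I_n -> R)
    (B : 'I_n -> nat -> R) :
  (forall i, B i 0%N = 0) -> bias_formula P g alpha beta B.
Proof.
move=> B0.
pose spillover i z := B i (exposure g z i) * (treated_share z i - control_share z i).
have Exp_term i : Exp P (fun z =>
      (alpha i + beta i + B i (exposure g z i)) * treated_share z i
      - (alpha i + B i (exposure g z i)) * control_share z i)
    = beta i / n%:R + Exp P (spillover i).
  rewrite (@eq_Exp _ _ _ _ (fun z => (alpha i + beta i) * treated_share z i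
                                      - alpha i * control_share z i + spillover i z)).
    by rewrite ExpD ExpB !ExpZ Exp_treated_share Exp_control_share; ring.
  by move=> z _; rewrite /spillover; ring.
have bias_term i : \sum_(1 <= e < (degree g i).+1)
      B i e * (alpha_ze P g i true e - alpha_ze P g i false e) = Exp P (spillover i).
  under eq_bigr do rewrite alpha_ze_trueE alpha_ze_falseE -ExpB -ExpZ.
  rewrite -Exp_sum; apply: eq_Exp => z _.
  under eq_bigr do rewrite -mulrBr mulrA.
  by rewrite -mulr_suml sum_nat_indicator ?exposure_le_degree.
rewrite /bias_formula (eq_Exp (fun z _ => beta_naiveE g alpha beta B z)) Exp_sum.
under eq_bigr do rewrite Exp_term.
under [RHS]eq_bigr do rewrite bias_term.
rewrite /DTE mulr_sumr -sumrB; apply: eq_bigr => i _.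
by rewrite /Ypot B0 /=; ring.
Qed.

End ExchangeableDesign.

Lemma crd_mass (R : realFieldType) n nt :
  (nt <= n)%N -> \sum_(z : assign n) crd R nt z = 1.
Proof.
move=> le_nt_n.
rewrite (@sum_assign_ntreated _ _ (fun k => if k == nt then 'C(n, nt)%:R^-1 else 0 : R)).
under eq_bigr do rewrite (fun_if (fun x => x *+ _)) mul0rn.
rewrite -big_mkcond /= (big_ord1_eq _ (fun k => 'C(n, nt)%:R^-1 *+ 'C(n, k))) ltnS le_nt_n.
by rewrite -[LHS]mulr_natr mulVf // pnatr_eq0 -lt0n bin_gt0.
Qed.

Lemma rbd_normalizer_gt0 (R : realFieldType) n (p : R) :
  (1 < n)%N -> 0 < p < 1 -> 0 < 1 - p ^+ n - (1 - p) ^+ n.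
Proof.
move=> n_gt1 /andP[p_gt0 p_lt1].
have lt_pow (x : R) : 0 < x -> x < 1 -> x ^+ n < x.
  by move=> x_gt0 x_lt1; rewrite -[ltRHS]expr1 ltr_iXn2l.
have := lt_pow p p_gt0 p_lt1; have := lt_pow (1 - p).
rewrite subr_gt0 ltrBlDr ltrDl => /(_ p_lt1 p_gt0); lra.
Qed.

Lemma rbd_mass (R : realFieldType) n (p : R) :
  (1 < n)%N -> 0 < p < 1 -> \sum_(z : assign n) rbd p z = 1.
Proof.
move=> n_gt1 p01; have := rbd_normalizer_gt0 n_gt1 p01.
case: n n_gt1 => [|[|m]] // _; set D := 1 - p ^+ m.+2 - _ => D_gt0.
have peel (F : nat -> R) :
    \sum_(k < m.+3) F k = F 0%N + \sum_(k < m.+1) F k.+1 + F m.+2.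
  by rewrite big_ord_recl big_ord_recr addrA.
pose binom_term k := (1 - p) ^+ (m.+2 - k) * p ^+ k *+ 'C(m.+2, k).
have interior : \sum_(k < m.+1) binom_term k.+1 = D.
  have := exprDn (1 - p) p m.+2; rewrite subrK expr1n (peel binom_term) /binom_term.
  by rewrite subn0 subnn !expr0 mulr1 mul1r bin0 binn !mulr1n /D; lra.
pose weight k := if (0 < k < m.+2)%N then p ^+ k * (1 - p) ^+ (m.+2 - k) / D else 0.
rewrite (@sum_assign_ntreated _ _ weight) (peel (fun k => weight k *+ 'C(m.+2, k))) /weight.
rewrite /= ltnn !mul0rn add0r addr0.
transitivity ((\sum_(k < m.+1) binom_term k.+1) / D).
  rewrite mulr_suml; apply: eq_bigr => k _ /=.
  by rewrite ltnS ltn_ord -mulrnAl [p ^+ _ * _]mulrC.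
by rewrite interior divff ?lt0r_neq0.
Qed.

Theorem corollary1 (R : realFieldType) (n : nat) (g : rel 'I_n)
  (alpha beta : 'I_n -> R) (B : 'I_n -> nat -> R) :
  (2 <= n)%N -> simple_graph g -> (forall i, B i 0%N = 0) ->
  (forall nt : nat, (1 <= nt <= n - 1)%N -> bias_formula (@crd R n nt) g alpha beta B) /\
  (forall p : R, 0 < p < 1 -> bias_formula (@rbd R n p) g alpha beta B).
Proof.
move=> n_ge2 _ B0; split.
- move=> nt /andP[nt_gt0 nt_le]; have nt_lt_n : (nt < n)%N.
    by rewrite -(subnK (ltnW n_ge2)) addn1 ltnS.
  apply: (@bias_formula_exchangeable _ _
            (fun k => if k == nt then 'C(n, nt)%:R^-1 else 0)) => //.
    by move=> k /=; have [-> _|_] := eqVneq k nt; rewrite ?nt_gt0 ?eqxx.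
  exact/crd_mass/ltnW.
- move=> p p01.
  apply: (@bias_formula_exchangeable _ _ (fun k => if (0 < k < n)%N
            then p ^+ k * (1 - p) ^+ (n - k) / (1 - p ^+ n - (1 - p) ^+ n) else 0)) => //.
    by move=> k /=; case: ifP => // _; rewrite eqxx.
  exact: rbd_mass.
Qed.
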